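(* Every NSS topological group is TAP.
   Context: Topological groups are Hausdorff. A topological group is NSS if some open neighborhood of the identity contains no nontrivial subgroup. A subset $A$ of a topological group $G$ is absolutely productive in $G$ if for every injection $a:\mathbb{N}\to A$ and every map $z:\mathbb{N}\to\mathbb{Z}$ the sequence $\left(\prod_{n=0}^{k}a(n)^{z(n)}\right)_{k\in\mathbb{N}}$ converges to some element of $G$. $G$ is TAP if every absolutely productive subset of $G$ is finite. *)

From HB Require Import structures.
From mathcomp Require Import all_boot all_order.
From mathcomp Require Import ssralg ssrint.
From mathcomp Require Import boolp classical_sets functions cardinality topology.

Set Implicit Arguments.
Unset Strict Implicit.
Unset Printing Implicit Defensive.

Local Open Scope classical_set_scope.
Local Open Scope group_scope.

(* A topological group: a (possibly non-abelian) group whose carrier is a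
   topological space, with continuous multiplication and inversion.
   (Hausdorffness is imposed separately, see [hausdorff_space] in the theorem.) *)
HB.mixin Record isTopologicalGroup G of Group G & Topological G := {
  mulg_continuous : continuous (fun xy : G * G => (xy.1 * xy.2)%g) ;
  invg_continuous : continuous (fun x : G => x^-1%g)
}.

#[short(type="topGroupType")]
HB.structure Definition TopologicalGroup :=
  {G of isTopologicalGroup G & Group G & Topological G}.

Definition zexpg (G : groupType) (x : G) (z : int) : G :=
  match z with
  | Posz n => x ^+ n
  | Negz n => (x ^+ n.+1)^-1
  end.

Definition is_subgroup (G : groupType) (H : set G) : Prop :=
  H 1 /\ (forall x y, H x -> H y -> H (x * y)) /\ (forall x, H x -> H (x^-1)).

Definition NSS (G : topGroupType) : Prop :=
  exists U : set G, open U /\ U 1 /\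
    forall H : set G, is_subgroup H -> H `<=` U -> H = [set 1].

Definition absolutely_productive (G : topGroupType) (A : set G) : Prop :=
  forall (a : nat -> G) (z : nat -> int),
    injective a -> (forall n, A (a n)) ->
    exists g : G,
      (fun k : nat => \prod_(0 <= n < k.+1) zexpg (a n) (z n)) @ \oo --> g.

Definition TAP (G : topGroupType) : Prop :=
  forall A : set G, absolutely_productive A -> finite_set A.

(* If a is an injective sequence in A, choose exponents z n so that every
   nontrivial a n ^ z n escapes the neighbourhood U of 1 that contains no
   nontrivial subgroup; such exponents exist because otherwise the cyclic
   subgroup generated by a n would lie in U.  If the partial products p k of
   the a n ^ z n converged, the consecutive quotients (p k)^-1 p (k+1) =
   a (k+1) ^ z (k+1) would converge to 1 and hence eventually lie in U, which
   is impossible since a takes the value 1 at most once. *)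
From mathcomp Require Import all_boot all_order.
From mathcomp Require Import ssrint boolp classical_sets topology.
From mathcomp Require Import functions cardinality.

Local Open Scope classical_set_scope.
Local Open Scope group_scope.

Section CyclicSubgroup.
Context {G : groupType}.

Definition cyclic_set (x : G) : set G :=
  [set y | exists m n : nat, y = x ^+ m / x ^+ n].

Lemma cyclic_set_zexpg (x y : G) : cyclic_set x y -> exists z, y = zexpg x z.
Proof.
move=> [m [n ->]]; case: (leqP n m) => hnm.
  by exists (Posz (m - n)%N); rewrite [zexpg _ _]/= (expgnFr x hnm).
exists (Negz (n - m).-1); rewrite [zexpg _ _]/= prednK ?subn_gt0 //.
by rewrite (expgnFr x (ltnW hnm)) invgF.
Qed.

Lemma cyclic_set_subgroup (x : G) : is_subgroup (cyclic_set x).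
Proof.
split; first by exists 0%N, 0%N; rewrite mulgV.
split=> [_ _ [m [n ->]] [p [q ->]]|_ [m [n ->]]]; last by exists n, m; rewrite invgF.
exists (m + p)%N, (q + n)%N.
have xVnxp : commute (x ^+ n)^-1 (x ^+ p).
  exact/commute_sym/commuteV/commuteX2/commute_refl.
rewrite -mulgA [(x ^+ n)^-1 * _]mulgA xVnxp !mulgA -expgnDr -mulgA -invgM.
by rewrite -expgnDr.
Qed.

Lemma cyclic_set_gen (x : G) : cyclic_set x x.
Proof. by exists 1%N, 0%N; rewrite expg0 invg1 mulg1. Qed.

Lemma zexpg_escape {U : set G} :
    (forall H, is_subgroup H -> H `<=` U -> H = [set 1]) ->
  forall x, x != 1 -> exists z, ~ U (zexpg x z).
Proof.
move=> smallU x x_neq1; apply: contrapT => zexpgU.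
have cycU : cyclic_set x `<=` U.
  move=> y /cyclic_set_zexpg [z ->]; apply: contrapT => notU.
  by apply: zexpgU; exists z.
have : cyclic_set x x := cyclic_set_gen x.
rewrite (smallU _ (cyclic_set_subgroup x) cycU) => /= x1.
by rewrite x1 eqxx in x_neq1.
Qed.

End CyclicSubgroup.

Lemma cvg_succ (T : topologicalType) (u : nat -> T) (l : T) :
  u @ \oo --> l -> (fun k => u k.+1) @ \oo --> l.
Proof. by move=> ul P /ul [N _ uNP]; exists N => // k /= /leqW; apply: uNP. Qed.

Lemma infinite_set_injective_seq (T : choiceType) (A : set T) :
  infinite_set A -> exists a : nat -> T, injective a /\ forall n, A (a n).
Proof.
elim/choicePpointed: T => T in A *; first by rewrite emptyE.
move=> /infiniteP/pcard_leP[f]; exists f; split; last by move=> n; apply: funS.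
by move=> x y; apply: inj; rewrite ?inE.
Qed.

Lemma injective_seq_neq {T : eqType} {a : nat -> T} :
  injective a -> forall x N, exists2 k, N < k & a k != x.
Proof.
move=> ainj x N; have [aSN|] := eqVneq (a N.+1) x; last by exists N.+1.
exists N.+2 => //; apply/eqP => aSSN.
by apply: (n_Sn N.+1); apply: ainj; rewrite aSN aSSN.
Qed.

Lemma cvg_mulVg_succ {G : topGroupType} {p : nat -> G} {g : G} :
  p @ \oo --> g -> (fun k => (p k)^-1 * p k.+1) @ \oo --> 1.
Proof.
move=> pg; rewrite -(mulVg g).
apply: (@continuous_cvg _ _ _ _ _ (fun k => ((p k)^-1, p k.+1))
  (fun xy : G * G => xy.1 * xy.2) (g^-1, g) (mulg_continuous _)).
apply: cvg_pair; last exact: cvg_succ.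
exact: (@continuous_cvg _ _ _ _ _ p (fun x : G => x^-1) g (invg_continuous _)).
Qed.

Theorem theorem4p9 (G : topGroupType) :
  hausdorff_space G -> NSS G -> TAP G.
Proof.
move=> _ [U [oU [U1 smallU]]] A Aap.
apply: contrapT => /infinite_set_injective_seq [a [ainj aA]].
have [z zU] : {z : nat -> int & forall n, a n != 1 -> ~ U (zexpg (a n) (z n))}.
  apply: (@choice _ _ (fun n z => a n != 1 -> ~ U (zexpg (a n) z))) => n.
  have [->|an1] := eqVneq (a n) 1; first by exists 0%Z => /eqP.
  by have [z zU] := zexpg_escape smallU _ an1; exists z.
have [g pg] := Aap a z ainj aA.
set p := fun k : nat => _ in pg.
have pVpS k : (p k)^-1 * p k.+1 = zexpg (a k.+1) (z k.+1).
  by rewrite /p (big_nat_recr k.+1 0) //= mulKg.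
have [N _ nearU] : \forall k \near \oo, U ((p k)^-1 * p k.+1).
  by apply: (cvg_mulVg_succ pg); apply: open_nbhs_nbhs.
have [[//|k] ltNk ak1] := injective_seq_neq ainj 1 N.
by apply: (zU _ ak1); rewrite -pVpS; apply: nearU.
Qed.
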